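(* Let $P\subset\mathbb{R}^d$ be a finite dataset with $|P|=n$, let $s$ be the number of compute nodes, $t<s$, $\delta>0$, and let $A\in\{0,1\}^{s\times n}$ (columns indexed by the points of $P$) satisfy the straggler-resilience property with parameter $\delta$. For $i\in[s]$ let $P_i$ be the set of points $\mathbf{p}\in P$ whose column has a $1$ in row $i$. Let $\mathcal{R}\subseteq[s]$ with $|\mathcal{R}|\ge s-t$ and let $\mathbf{b}=(b_i)_{i\in\mathcal{R}}$ be a corresponding non-negative recovery vector. For each $i\in\mathcal{R}$ let $Y_i\subset\mathbb{R}^d$ be an optimal set of $k$ $k$-median centers for $P_i$ (i.e. $Y_i$ minimizes $\mathrm{cost}(P_i,\cdot)$ over all sets of $k$ points of $\mathbb{R}^d$), and define $w_i:Y_i\to\mathbb{R}$ by $w_i(\mathbf{c})=|\mathrm{cluster}(\mathbf{c},P_i)|$. Let $Y=\bigcup_{i\in\mathcal{R}}Y_i$ with weight $w(\mathbf{c})=\sum_{i\in\mathcal{R}:\,\mathbf{c}\in Y_i}b_i\,w_i(\mathbf{c})$. Then for every set $C\subset\mathbb{R}^d$ of $k$ centers, $$\mathrm{cost}(P,C)-\sum_{i\in\mathcal{R}}b_i\,\mathrm{cost}(P_i,Y_i)\le\mathrm{cost}(Y,C,w)\le 2(1+\delta)\,\mathrm{cost}(P,C).$$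
   Context: $d(\mathbf{x},C)=\min_{\mathbf{c}\in C}\|\mathbf{x}-\mathbf{c}\|_2$. The $k$-median cost is $\mathrm{cost}(Q,C)=\sum_{\mathbf{q}\in Q}d(\mathbf{q},C)$, and for a weighted set $(Q,w)$, $\mathrm{cost}(Q,C,w)=\sum_{\mathbf{q}\in Q}w(\mathbf{q})d(\mathbf{q},C)$. For a center set $Y_i$, $\mathrm{cluster}(\mathbf{c},P_i)$ is the set of points of $P_i$ whose closest center in $Y_i$ is $\mathbf{c}$ (ties broken arbitrarily so that the clusters partition $P_i$). Straggler-resilience property with parameter $\delta$: for every $\mathcal{R}\subseteq[s]$ with $|\mathcal{R}|\ge s-t$, letting $A_{\mathcal{R}}$ be the rows of $A$ indexed by $\mathcal{R}$, there is a vector $\mathbf{b}\in\mathbb{R}^{|\mathcal{R}|}$ with non-negative entries (a recovery vector) such that $\mathbf{b}^TA_{\mathcal{R}}=(a_1,\ldots,a_n)$ with $1\le a_j\le 1+\delta$ for all $j$. *)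

From HB Require Import structures.
From mathcomp Require Import all_boot all_order all_algebra.
From mathcomp Require Import finmap.
From mathcomp Require Import reals.
Set Implicit Arguments. Unset Strict Implicit. Unset Printing Implicit Defensive.
Import Order.TTheory GRing.Theory Num.Theory.
Local Open Scope ring_scope.

Section KMedian.
Variables (R : realType) (d : nat).
Notation pt := 'rV[R]_d.

Definition edist (x y : pt) : R := Num.sqrt (\sum_(j < d) (x 0 j - y 0 j) ^+ 2).

(* d(x, C) = min_{c in C} ||x - c||_2  (meaningful for nonempty C) *)
Definition dist_set (x : pt) (C : {fset pt}) : R :=
  \big[Num.min/edist x (head x (enum_fset C))]_(c <- C) edist x c.

Definition cost (n : nat) (p : 'I_n -> pt) (Q : {set 'I_n}) (C : {fset pt}) : R :=
  \sum_(j in Q) dist_set (p j) C.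

Definition wcost (Q : {fset pt}) (C : {fset pt}) (w : pt -> R) : R :=
  \sum_(q <- Q) w q * dist_set q C.

Definition straggler_resilient (s n t : nat) (delta : R) (A : 'M[R]_(s, n)) : Prop :=
  forall Rs : {set 'I_s}, (s - t <= #|Rs|)%N ->
    exists b : 'I_s -> R, (forall i, i \in Rs -> 0 <= b i) /\
      forall j : 'I_n, 1 <= \sum_(i in Rs) b i * A i j <= 1 + delta.

Definition Pi (s n : nat) (A : 'M[R]_(s, n)) (i : 'I_s) : {set 'I_n} :=
  [set j | A i j == 1].

(* cluster assignment: a maps every point of Q to a closest center of Y
   (ties broken arbitrarily, so clusters partition Q) *)
Definition closest_assignment (n : nat) (p : 'I_n -> pt) (Q : {set 'I_n})
  (Y : {fset pt}) (a : 'I_n -> pt) : Prop :=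
  forall j, j \in Q -> a j \in Y /\ edist (p j) (a j) = dist_set (p j) Y.

Definition cluster_size (n : nat) (Q : {set 'I_n}) (a : 'I_n -> pt) (c : pt) : R :=
  #|[set j in Q | a j == c]|%:R.

End KMedian.

(* A point q of P_i and its center a_i(q) in Y_i are at distance d(q, Y_i), so by
   the triangle inequality d(a_i(q), C) lies within d(q, Y_i) of d(q, C).  Summing
   over P_i, cost(Y_i, C, w_i) lies between cost(P_i, C) - cost(P_i, Y_i) and
   cost(P_i, C) + cost(P_i, Y_i) <= 2 cost(P_i, C), the last step by optimality of
   Y_i.  Weighting by b_i gives cost(Y, C, w), and since A is a 0/1 matrix,
   sum_i b_i cost(P_i, C) counts every point of P between 1 and 1 + delta times. *)

From HB Require Import structures.
From mathcomp Require Import all_boot all_order all_algebra.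
From mathcomp Require Import finmap.
From mathcomp Require Import reals.
From mathcomp Require Import ring lra.
Set Implicit Arguments. Unset Strict Implicit. Unset Printing Implicit Defensive.
Import Order.TTheory GRing.Theory Num.Theory.
Local Open Scope ring_scope.

Section SumOfSquares.
Variables (R : rcfType) (I : finType).
Implicit Types u v : I -> R.

Lemma CauchySchwarz_sum u v :
  (\sum_i u i * v i) ^+ 2 <= (\sum_i u i ^+ 2) * (\sum_i v i ^+ 2).
Proof.
have lagrange : \sum_i \sum_j (u i * v j - u j * v i) ^+ 2 =
    (\sum_i u i ^+ 2) * (\sum_j v j ^+ 2) + (\sum_i v i ^+ 2) * (\sum_j u j ^+ 2)
    - 2 * ((\sum_i u i * v i) * (\sum_j u j * v j)).
  rewrite !big_distrlr /= mulr_sumr -big_split /= -sumrB; apply: eq_bigr => i _.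
  rewrite mulr_sumr -big_split /= -sumrB; apply: eq_bigr => j _; ring.
have : 0 <= \sum_i \sum_j (u i * v j - u j * v i) ^+ 2.
  by apply: sumr_ge0 => i _; apply: sumr_ge0 => j _; exact: sqr_ge0.
rewrite lagrange [(\sum_i v i ^+ 2) * _]mulrC expr2; lra.
Qed.

Lemma Minkowski_sum u v :
  Num.sqrt (\sum_i (u i + v i) ^+ 2)
    <= Num.sqrt (\sum_i u i ^+ 2) + Num.sqrt (\sum_i v i ^+ 2).
Proof.
set su := \sum_i u i ^+ 2; set sv := \sum_i v i ^+ 2.
have su_ge0 : 0 <= su by apply: sumr_ge0 => i _; exact: sqr_ge0.
have sv_ge0 : 0 <= sv by apply: sumr_ge0 => i _; exact: sqr_ge0.
have cross : \sum_i u i * v i <= Num.sqrt su * Num.sqrt sv.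
  rewrite -sqrtrM // (le_trans (ler_norm _)) // -sqrtr_sqr ler_sqrt //.
    exact: CauchySchwarz_sum.
  by rewrite mulr_ge0.
have expand : \sum_i (u i + v i) ^+ 2 = su + 2 * \sum_i u i * v i + sv.
  by rewrite mulr_sumr -!big_split /=; apply: eq_bigr => i _; ring.
rewrite -ler_sqr ?nnegrE ?addr_ge0 ?sqrtr_ge0 // sqr_sqrtr; last first.
  by apply: sumr_ge0 => i _; exact: sqr_ge0.
by rewrite expand sqrrD !sqr_sqrtr //; lra.
Qed.

End SumOfSquares.

Section Distance.
Variables (R : realType) (d : nat).
Notation pt := 'rV[R]_d.
Implicit Types (x y z : pt) (C : {fset pt}).

Lemma edist_sym x y : edist x y = edist y x.
Proof. by congr Num.sqrt; apply: eq_bigr => j _; rewrite -sqrrN opprB. Qed.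

Lemma edist_triangle x y z : edist x z <= edist x y + edist y z.
Proof.
rewrite /edist (eq_bigr (fun j => (x 0 j - y 0 j + (y 0 j - z 0 j)) ^+ 2)).
  exact: Minkowski_sum.
by move=> j _; rewrite addrA subrK.
Qed.

Lemma dist_set_le x C c : c \in C -> dist_set x C <= edist x c.
Proof. by move=> cC; apply: ge_bigmin_seq. Qed.

Lemma dist_set_ge0 x C : 0 <= dist_set x C.
Proof.
by apply: (big_ind (>= 0)) => [|u v|c _]; rewrite ?sqrtr_ge0 // le_min => ->.
Qed.

Lemma dist_set_attained x C : C != fset0 -> exists2 c, c \in C & dist_set x C = edist x c.
Proof.
case/fset0Pn=> c0 c0C; rewrite /dist_set big_seq.
apply: (big_ind (fun m => exists2 c, c \in C & m = edist x c)).
- exists (head x (enum_fset C)) => //.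
  suff : head x (enum_fset C) \in enum_fset C by [].
  have : c0 \in enum_fset C := c0C.
  by case: (enum_fset C) => // c r _; rewrite mem_head.
- by move=> _ _ [c cC ->] [c' c'C ->]; rewrite minEle; case: ifP => _; [exists c | exists c'].
- by move=> c cC; exists c.
Qed.

Lemma dist_set_triangle x y C : C != fset0 -> dist_set x C <= edist x y + dist_set y C.
Proof.
move=> /(dist_set_attained y) [c cC ->].
exact: le_trans (dist_set_le x cC) (edist_triangle x y c).
Qed.

End Distance.

Section Clustering.
Variables (R : realType) (d n : nat).
Notation pt := 'rV[R]_d.
Variables (p : 'I_n -> pt) (Q : {set 'I_n}) (Y C : {fset pt}) (a : 'I_n -> pt).

Lemma wcost_cluster_size : (forall j, j \in Q -> a j \in Y) ->
  wcost Y C (cluster_size Q a) = \sum_(j in Q) dist_set (a j) C.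
Proof.
move=> aQY; rewrite /wcost.
under eq_bigr => c _ do rewrite /cluster_size mulr_natl -sumr_const big_mkcond.
rewrite exchange_big [RHS]big_mkcond; apply: eq_bigr => j _ /=.
case: (boolP (j \in Q)) => [jQ | /negbTE jQ]; last by rewrite big1 // => c _; rewrite inE jQ.
rewrite (bigD1_seq (a j)) ?fset_uniq ?aQY //= inE jQ eqxx big1 ?addr0 // => c /negbTE ca.
by rewrite inE jQ eq_sym ca.
Qed.

Hypothesis (aQ : closest_assignment p Q Y a) (C0 : C != fset0).

Lemma cost_le_cost_add_wcost_cluster :
  cost p Q C <= cost p Q Y + wcost Y C (cluster_size Q a).
Proof.
rewrite wcost_cluster_size => [|j /aQ []//]; rewrite /cost -big_split.
apply: ler_sum => j /aQ [_ <-]; exact: dist_set_triangle.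
Qed.

Lemma wcost_cluster_le_cost_add_cost :
  wcost Y C (cluster_size Q a) <= cost p Q Y + cost p Q C.
Proof.
rewrite wcost_cluster_size => [|j /aQ []//]; rewrite /cost -big_split.
by apply: ler_sum => j /aQ [_ <-]; rewrite edist_sym dist_set_triangle.
Qed.

End Clustering.

Section Aggregation.
Variables (R : realType) (d : nat).
Notation pt := 'rV[R]_d.

Lemma wcost_bigfcup (I : finType) (J : {pred I}) (Y : I -> {fset pt})
    (b : I -> R) (w : I -> pt -> R) (C : {fset pt}) :
  wcost (\bigcup_(i <- enum J) Y i)%fset C (fun c => \sum_(i in J | c \in Y i) b i * w i c)
    = \sum_(i in J) b i * wcost (Y i) C (w i).
Proof.
rewrite /wcost /=; under eq_bigr => c _ do rewrite mulr_suml big_mkcondr.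
rewrite exchange_big; apply: eq_bigr => i iJ /=.
have YiY : (Y i `<=` \bigcup_(i <- enum J) Y i)%fset by apply: bigfcup_sup; rewrite ?mem_enum.
rewrite -(big_fset_incl _ YiY) => [|c _ /negbTE -> //].
by rewrite mulr_sumr; apply: eq_big_seq => c ->; rewrite mulrA.
Qed.

Variables (n s : nat) (A : 'M[R]_(s, n)).
Hypothesis A01 : forall i j, A i j = 0 \/ A i j = 1.

Lemma sum_Pi_weighted (J : {pred 'I_s}) (b : 'I_s -> R) (f : 'I_n -> R) :
  \sum_(i in J) b i * \sum_(j in Pi A i) f j = \sum_j (\sum_(i in J) b i * A i j) * f j.
Proof.
under eq_bigr => i _ do rewrite big_mkcond mulr_sumr.
rewrite exchange_big; apply: eq_bigr => j _; rewrite mulr_suml; apply: eq_bigr => i _.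
by rewrite inE; case: (A01 i j) => ->; rewrite ?eqxx ?mulr1 // eq_sym oner_eq0 !mulr0 mul0r.
Qed.

Lemma recovery_sum_cost_bounds (p : 'I_n -> pt) (C : {fset pt}) (J : {pred 'I_s})
    (b : 'I_s -> R) (lo hi : R) :
  (forall j, lo <= \sum_(i in J) b i * A i j <= hi) ->
  lo * cost p setT C <= \sum_(i in J) b i * cost p (Pi A i) C <= hi * cost p setT C.
Proof.
move=> cover; rewrite sum_Pi_weighted /cost (eq_bigl _ _ (fun j => in_setT j)).
rewrite !mulr_sumr; apply/andP; split; apply: ler_sum => j _;
  have /andP [lo_j hi_j] := cover j; by rewrite ler_wpM2r ?dist_set_ge0.
Qed.

End Aggregation.

Theorem lemma2 (R : realType) (d n s t k : nat) (delta : R)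
  (p : 'I_n -> 'rV[R]_d) (A : 'M[R]_(s, n))
  (Rs : {set 'I_s}) (b : 'I_s -> R)
  (Y : 'I_s -> {fset 'rV[R]_d}) (a : 'I_s -> 'I_n -> 'rV[R]_d) :
  injective p ->
  (0 < k)%N ->
  (t < s)%N ->
  0 < delta ->
  (forall i j, A i j = 0 \/ A i j = 1) ->
  straggler_resilient t delta A ->
  (s - t <= #|Rs|)%N ->
  (forall i, i \in Rs -> 0 <= b i) ->
  (forall j : 'I_n, 1 <= \sum_(i in Rs) b i * A i j <= 1 + delta) ->
  (forall i, i \in Rs -> (#|` Y i| = k)%fset) ->
  (forall i, i \in Rs -> forall C : {fset 'rV[R]_d}, (#|` C| = k)%fset ->
       cost p (Pi A i) (Y i) <= cost p (Pi A i) C) ->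
  (forall i, i \in Rs -> closest_assignment p (Pi A i) (Y i) (a i)) ->
  let Yall := (\bigcup_(i <- enum Rs) Y i)%fset in
  let w := fun c => \sum_(i in Rs | c \in Y i) b i * cluster_size (Pi A i) (a i) c in
  forall C : {fset 'rV[R]_d}, (#|` C| = k)%fset ->
    cost p setT C - \sum_(i in Rs) b i * cost p (Pi A i) (Y i) <= wcost Yall C w
    /\ wcost Yall C w <= 2 * (1 + delta) * cost p setT C.
Proof.
(* b is assumed to be a recovery vector outright. *)
move=> _ k_gt0 _ _ A01 _ _ b_ge0 cover _ Y_opt a_closest Yall w C C_k.
have C0 : C != fset0 by rewrite -cardfs_gt0 C_k.
have -> : wcost Yall C w = \sum_(i in Rs) b i * wcost (Y i) C (cluster_size (Pi A i) (a i)).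
  exact: wcost_bigfcup.
have /andP [cost_le cost_ge] := recovery_sum_cost_bounds A01 p C cover.
split.
- rewrite lerBlDl -big_split /=; rewrite mul1r in cost_le.
  apply: (le_trans cost_le); apply: ler_sum => i iRs.
  rewrite -mulrDr ler_wpM2l ?b_ge0 //.
  exact: cost_le_cost_add_wcost_cluster (a_closest i iRs) C0.
- rewrite -mulrA (le_trans _ (ler_wpM2l _ cost_ge)) // mulr_sumr; apply: ler_sum => i iRs.
  rewrite mulrCA ler_wpM2l ?b_ge0 //.
  apply: (le_trans (wcost_cluster_le_cost_add_cost (a_closest i iRs) C0)).
  by rewrite mulrDl mul1r lerD2r Y_opt.
Qed.
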